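(* Let $n\ge1$ and $k\ge0$ be integers and $a,b,c\in\mathbb{C}$ such that $c+k,\ a+b+1-n-c,\ c-a,\ b-c-k-n+1\notin\{0,-1,-2,\dots\}$. Then $${}_3F_2\!\left(\left.\begin{array}{c}-n,\ a,\ b\\ c+k,\ a+b+1-n-c\end{array}\right|1\right)=\frac{(c-a)_n\,(c-b+k)_n}{(c+k)_n\,(c-a-b)_n}\;{}_3F_2\!\left(\left.\begin{array}{c}-k,\ -n,\ b\\ c-a,\ b-c-k-n+1\end{array}\right|1\right).$$ (For $k=0$ this is the Pfaff–Saalschütz formula.)
   Context: ${}_3F_2(a_1,a_2,a_3;b_1,b_2;1)=\sum_{m\ge0}\frac{(a_1)_m(a_2)_m(a_3)_m}{m!\,(b_1)_m(b_2)_m}$ with $(\alpha)_m=\Gamma(\alpha+m)/\Gamma(\alpha)$; both series here terminate (upper parameters $-n$, resp. $-k,-n$). *)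

From HB Require Import structures.
From mathcomp Require Import all_boot all_order all_algebra.
Set Implicit Arguments. Unset Strict Implicit. Unset Printing Implicit Defensive.
Import Order.TTheory GRing.Theory Num.Theory.
Local Open Scope ring_scope.

Definition poch (R : nzRingType) (x : R) (m : nat) : R :=
  \prod_(i < m) (x + i%:R).

(* Terminating 3F2 at argument 1: the series sum_{m>=0}, truncated after
   m = N; used only when some upper parameter is -N' with N' <= N, so that all
   terms with m > N vanish and this is the full (terminating) series. *)
Definition F32 (R : fieldType) (N : nat) (a1 a2 a3 b1 b2 : R) : R :=
  \sum_(m < N.+1)
    (poch a1 m * poch a2 m * poch a3 m) / (m`!%:R * poch b1 m * poch b2 m).

Definition not_nonpos_int (R : nzRingType) (x : R) : Prop :=
  forall j : nat, x != - (j%:R).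

From HB Require Import structures.
From mathcomp Require Import all_boot all_order all_algebra.
From mathcomp Require Import ring.
Import Order.TTheory GRing.Theory Num.Theory.
Local Open Scope ring_scope.

(* For a terminating series one has the transformation
     3F2(-n, b, x; d, e | 1) = (e-b)_n/(e)_n * 3F2(-n, d-x, b; d, 1+b-n-e | 1):
   expand (x)_m/(d)_m = sum_i (-m)_i (d-x)_i/(i! (d)_i) by Chu-Vandermonde,
   exchange the two finite sums, and evaluate the inner sum over m by
   Chu-Vandermonde again, after the shift m = i + t.  Applied to
   3F2(-n, b, c+k-a; c+k, c-a | 1) with its two lower parameters taken in either
   order, it gives both sides of the theorem, up to the stated prefactors. *)

Section PochhammerRing.
Context {R : comNzRingType}.
Implicit Types x y z : R.
Local Notation P := (@poch R).

Lemma poch0 x : P x 0 = 1.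
Proof. by rewrite /poch big_ord0. Qed.

Lemma pochS x m : P x m.+1 = P x m * (x + m%:R).
Proof. by rewrite /poch big_ord_recr. Qed.

Lemma pochD x m t : P x (m + t) = P x m * P (x + m%:R) t.
Proof.
elim: t => [|t IHt]; first by rewrite addn0 poch0 mulr1.
by rewrite addnS !pochS IHt -mulrA natrD addrA.
Qed.

Lemma poch_split x {j N} : (j <= N)%N -> P x N = P x j * P (x + j%:R) (N - j).
Proof. by move=> le_jN; rewrite -pochD subnKC. Qed.

Lemma poch_refl x N : P (1 - x - N%:R) N = (-1) ^+ N * P x N.
Proof.
elim: N => [|N IHN]; first by rewrite !poch0 mulr1.
rewrite -add1n pochD (pochS _ 0) poch0 mul1r addr0.
have -> : 1 - x - (1 + N)%:R + 1 = 1 - x - N%:R by rewrite natrD; ring.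
by rewrite IHN add1n pochS exprS; ring.
Qed.

Lemma pochB_refl y {N j} : (j <= N)%N ->
  P y N = (-1) ^+ j * P (1 - y - N%:R) j * P y (N - j).
Proof.
move=> le_jN; rewrite -{1}(subnK le_jN) pochD mulrC.
have -> : 1 - y - N%:R = 1 - (y + (N - j)%:R) - j%:R by rewrite natrB //; ring.
by rewrite poch_refl mulrA -expr2 sqrr_sign mul1r.
Qed.

Lemma poch_vandermonde x z N :
  P (x + z) N = \sum_(t < N.+1) P x t * P z (N - t) *+ 'C(N, t).
Proof.
elim: N => [|N IHN]; first by rewrite big_ord1 !poch0 mulr1 bin0.
have step (t : 'I_N.+1) : P x t * P z (N - t) *+ 'C(N, t) * (x + z + N%:R)
    = P x t.+1 * P z (N - t) *+ 'C(N, t) + P x t * P z (N.+1 - t) *+ 'C(N, t).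
  rewrite subSn ?leq_ord // !pochS natrB ?leq_ord //.
  by rewrite mulrnAl -mulrnDl; congr (_ *+ _); ring.
rewrite pochS IHN mulr_suml (eq_bigr _ (fun t _ => step t)) big_split /=.
rewrite [in RHS]big_ord_recl bin0 subn0 poch0 mul1r.
under [in RHS]eq_bigr => t _ do rewrite binS mulrnDr subSS.
rewrite big_split /= [X in _ = _ + X]addrC addrCA; congr (_ + _).
rewrite big_ord_recl bin0 subn0 poch0 !mul1r; congr (_ + _).
rewrite big_ord_recr /= bin_small // mulr0n addr0.
by apply: eq_bigr => t _; rewrite subSS /bump leq0n add1n.
Qed.

Lemma poch_negn_eq0 {m j} : (m < j)%N -> P (- m%:R) j = 0.
Proof. by move=> lt_mj; rewrite /poch (bigD1 (Ordinal lt_mj)) //= addNr mul0r. Qed.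

Lemma factD_poch t j : (t + j)`!%:R = t`!%:R * P t.+1%:R j.
Proof.
elim: j => [|j IHj]; first by rewrite addn0 poch0 mulr1.
by rewrite addnS factS natrM IHj pochS -addSn natrD; ring.
Qed.

Lemma poch_negn_fact N t : (t <= N)%N ->
  P (- N%:R) t * (N - t)`!%:R = (-1) ^+ t * N`!%:R.
Proof.
move=> le_tN; have := poch_refl (N - t).+1%:R t.
have -> : 1 - (N - t).+1%:R - t%:R = - N%:R :> R.
  by rewrite -addn1 natrD natrB //; ring.
by move=> ->; rewrite -mulrA [P _ _ * _]mulrC -factD_poch subnK.
Qed.

End PochhammerRing.

Section PochhammerField.
Context {R : numFieldType}.
Implicit Types x y : R.
Local Notation P := (@poch R).

Lemma fact_neq0 m : m`!%:R != 0 :> R.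
Proof. by rewrite pnatr_eq0 -lt0n fact_gt0. Qed.

Lemma poch_neq0 {x} m : not_nonpos_int x -> P x m != 0.
Proof. by move=> x_ok; apply/prodf_neq0 => i _; rewrite addr_eq0. Qed.

Lemma poch_split_neq0 {y j N} : (j <= N)%N -> P y N != 0 ->
  P y j != 0 /\ P (y + j%:R) (N - j) != 0.
Proof. by move=> le_jN; rewrite (poch_split y le_jN) mulf_eq0 negb_or => /andP. Qed.

Lemma poch_negn_bin N t : (t <= N)%N ->
  P (- N%:R) t = (-1) ^+ t * 'C(N, t)%:R * t`!%:R.
Proof.
move=> le_tN; apply: (mulIf (fact_neq0 (N - t))).
by rewrite poch_negn_fact // -!mulrA -!natrM bin_fact.
Qed.

Lemma chu_vandermonde_term x y {N t} : (t <= N)%N -> P y N != 0 ->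
  P x t * P (1 - y - N%:R) (N - t) *+ 'C(N, t)
  = (-1) ^+ N * P y N * (P (- N%:R) t * P x t / (t`!%:R * P y t)).
Proof.
move=> le_tN nz_yN; have [nz_yt _] := poch_split_neq0 le_tN nz_yN.
have -> : 1 - y - N%:R = 1 - (y + t%:R) - (N - t)%:R by rewrite natrB //; ring.
rewrite (poch_split y le_tN) poch_refl poch_negn_bin //.
rewrite -signr_odd oddB // signr_addb !signr_odd -mulr_natr.
by field; rewrite nz_yt fact_neq0.
Qed.

Lemma chu_vandermonde x y N : P y N != 0 ->
  \sum_(t < N.+1) P (- N%:R) t * P x t / (t`!%:R * P y t) = P (y - x) N / P y N.
Proof.
move=> nz_yN; have := poch_vandermonde x (1 - y - N%:R) N.
have -> : x + (1 - y - N%:R) = 1 - (y - x) - N%:R by ring.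
rewrite poch_refl (eq_bigr _ (fun t _ => chu_vandermonde_term x y (leq_ord t) nz_yN)).
rewrite -mulr_sumr -mulrA => /mulfI -> //; last by rewrite signr_eq0.
by field.
Qed.

Lemma chu_vandermonde_widen x y m n : (m <= n)%N -> P y m != 0 ->
  \sum_(i < n.+1) P (- m%:R) i * P x i / (i`!%:R * P y i) = P (y - x) m / P y m.
Proof.
move=> le_mn nz_ym.
rewrite (bigID (fun i : 'I_n.+1 => (i < m.+1)%N)) /= [X in _ + X]big1 ?addr0; last first.
  by move=> i; rewrite -leqNgt => lt_mi; rewrite poch_negn_eq0 // !mul0r.
rewrite -(big_ord_widen n.+1 (fun i => P (- m%:R) i * P x i / (i`!%:R * P y i))) //.
exact: chu_vandermonde.
Qed.

Lemma chu_vandermonde_shift_term x y {n j t} :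
  (j <= n)%N -> (t <= n - j)%N -> P y n != 0 ->
  P (- n%:R) (t + j) * P x (t + j) * P (- (t + j)%:R) j / ((t + j)`!%:R * P y (t + j))
  = (-1) ^+ j * P (- n%:R) j * P x j / P y j
    * (P (- (n - j)%:R) t * P (x + j%:R) t / (t`!%:R * P (y + j%:R) t)).
Proof.
move=> le_jn; rewrite -(leq_add2r j) subnK // => le_tjn nz_yn.
have [] := poch_split_neq0 le_tjn nz_yn; rewrite addnC in le_tjn * => + _.
have -> : P (- (j + t)%:R) j = (-1) ^+ j * (j + t)`!%:R / t`!%:R.
  apply: (mulIf (fact_neq0 t)); rewrite mulfVK ?fact_neq0 //.
  by rewrite -(poch_negn_fact (j + t) j (leq_addr t j)) addKn.
rewrite !pochD mulf_eq0 negb_or => /andP[nz_yj nz_yjt].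
have -> : - n%:R + j%:R = - (n - j)%:R :> R.
  by rewrite natrB ?(leq_trans (leq_addr t j) le_tjn) //; ring.
by field; rewrite nz_yj nz_yjt !fact_neq0.
Qed.

Lemma chu_vandermonde_shift x y n j : (j <= n)%N -> P y n != 0 ->
  \sum_(m < n.+1) P (- n%:R) m * P x m * P (- m%:R) j / (m`!%:R * P y m)
  = (-1) ^+ j * P (- n%:R) j * P x j * P (y - x) (n - j) / P y n.
Proof.
move=> le_jn nz_yn; have [nz_yj nz_yjn] := poch_split_neq0 le_jn nz_yn.
rewrite -(big_mkord xpredT (fun m => P (- n%:R) m * P x m * P (- m%:R) j / (m`!%:R * P y m))).
rewrite (big_cat_nat (n := j)) ?(leqW le_jn) //= big_nat_cond big1 ?add0r; last first.
  by move=> i /andP[/andP[_ lt_ij] _]; rewrite (poch_negn_eq0 lt_ij) mulr0 mul0r.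
rewrite -{1}(add0n j) big_addn subSn // big_mkord.
rewrite (eq_bigr _ (fun t _ => chu_vandermonde_shift_term x y le_jn (leq_ord t) nz_yn)).
rewrite -mulr_sumr chu_vandermonde //.
have -> : y + j%:R - (x + j%:R) = y - x by ring.
rewrite (poch_split y le_jn).
by field; rewrite nz_yj nz_yjn.
Qed.

End PochhammerField.

Section F32Symmetry.
Context {R : fieldType}.

Lemma F32_swap_upper N (a1 a2 a3 b1 b2 : R) : F32 N a1 a2 a3 b1 b2 = F32 N a2 a1 a3 b1 b2.
Proof. by apply: eq_bigr => m _; rewrite [poch a1 m * _]mulrC. Qed.

Lemma F32_swap_lower N (a1 a2 a3 b1 b2 : R) : F32 N a1 a2 a3 b1 b2 = F32 N a1 a2 a3 b2 b1.
Proof. by apply: eq_bigr => m _; rewrite -!mulrA [poch b1 m * _]mulrC. Qed.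

End F32Symmetry.

Lemma F32_negn_transform {R : numFieldType} n (b x d e : R) :
  poch d n != 0 -> poch e n != 0 -> poch (1 + b - n%:R - e) n != 0 ->
  F32 n (- n%:R) b x d e
  = poch (e - b) n / poch e n * F32 n (- n%:R) (d - x) b d (1 + b - n%:R - e).
Proof.
move=> nz_dn nz_en nz_fn; rewrite /F32 mulr_sumr.
transitivity (\sum_(m < n.+1) \sum_(i < n.+1)
    poch (- n%:R) m * poch b m / (m`!%:R * poch e m) *
    (poch (- m%:R) i * poch (d - x) i / (i`!%:R * poch d i))).
  apply: eq_bigr => m _; have le_mn := leq_ord m.
  have [[nz_dm _] [nz_em _]] := (poch_split_neq0 le_mn nz_dn, poch_split_neq0 le_mn nz_en).
  rewrite -mulr_sumr chu_vandermonde_widen // (_ : d - (d - x) = x); last by ring.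
  by field; rewrite nz_dm nz_em fact_neq0.
rewrite exchange_big /=; apply: eq_bigr => i _; have le_in := leq_ord i.
have [[nz_di _] [nz_fi _]] := (poch_split_neq0 le_in nz_dn, poch_split_neq0 le_in nz_fn).
transitivity (poch (d - x) i / (i`!%:R * poch d i) *
    \sum_(m < n.+1) poch (- n%:R) m * poch b m * poch (- m%:R) i / (m`!%:R * poch e m)).
  by rewrite mulr_sumr; apply: eq_bigr => m _; ring.
rewrite chu_vandermonde_shift // (pochB_refl (e - b) le_in).
have -> : 1 - (e - b) - n%:R = 1 + b - n%:R - e by ring.
by field; rewrite nz_en nz_di nz_fi fact_neq0.
Qed.

Theorem mainTheorem9 (C : numClosedFieldType) (n k : nat) (a b c : C) :
  (1 <= n)%N ->
  not_nonpos_int (c + k%:R) ->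
  not_nonpos_int (a + b + 1 - n%:R - c) ->
  not_nonpos_int (c - a) ->
  not_nonpos_int (b - c - k%:R - n%:R + 1) ->
  F32 n (- n%:R) a b (c + k%:R) (a + b + 1 - n%:R - c)
  = (poch (c - a) n * poch (c - b + k%:R) n) / (poch (c + k%:R) n * poch (c - a - b) n)
    * F32 n (- k%:R) (- n%:R) b (c - a) (b - c - k%:R - n%:R + 1).
Proof.
move=> _ /(poch_neq0 n) nz_ck /(poch_neq0 n) nz_s /(poch_neq0 n) nz_ca /(poch_neq0 n) nz_t.
have nz_cab : poch (c - a - b) n != 0.
  move: nz_s; have -> : a + b + 1 - n%:R - c = 1 - (c - a - b) - n%:R by ring.
  by rewrite poch_refl mulf_eq0 signr_eq0.
have E1 := F32_negn_transform n b (c + k%:R - a) (c + k%:R) (c - a) nz_ck nz_ca.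
have E2 := F32_negn_transform n b (c + k%:R - a) (c - a) (c + k%:R) nz_ca nz_ck.
have e_a : c + k%:R - (c + k%:R - a) = a by ring.
have e_s : 1 + b - n%:R - (c - a) = a + b + 1 - n%:R - c by ring.
have e_k : c - a - (c + k%:R - a) = - k%:R by ring.
have e_t : 1 + b - n%:R - (c + k%:R) = b - c - k%:R - n%:R + 1 by ring.
rewrite e_k e_t in E2; rewrite e_a e_s F32_swap_lower {}E2 // in E1.
rewrite [F32 _ (- k%:R) _ _ _ _]F32_swap_upper.
have -> : c - b + k%:R = c + k%:R - b by ring.
apply: (mulfI (mulf_neq0 nz_cab (invr_neq0 nz_ca))); rewrite -E1 //.
by field; rewrite nz_ck nz_ca nz_cab.
Qed.
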